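(* Every connected extended representation graph for $E$ that contains a source is isomorphic to $(F_v,\phi_v)$ for some $v\in E^0$.
   Context: $E=(E^0,E^1,s,r)$ is a row-finite directed graph; for each vertex $v$ emitting an edge a fixed edge $e^v\in s^{-1}(v)$ is called special, others nonspecial. The double graph $E_d$ has vertices $E^0$ and edges $e$ (real) and $e^*$ (ghost) for $e\in E^1$, with $s_d(e)=s(e),r_d(e)=r(e),s_d(e^* )=r(e),r_d(e^* )=s(e)$. Paths of length $0$ are vertices. For a path $p=e_1\dots e_n$ set $p^*=e_n^*\dots e_1^*$. The set $X$ of basis paths consists of the paths in $E_d$: vertices; $p,p^*$ for paths $p$ of length $\ge1$ in $E$; $pq^*$ with $p=e_1\dots e_k,q=f_1\dots f_n$ of length $\ge1$ in $E$, $r(p)=r(q)$, and $e_k\ne f_n$ or $e_k=f_n$ nonspecial. $X_v=\{x\in X: s_d(x)=v\}$. An extended representation graph for $E$ is a pair $(F,\phi)$, $F$ a directed graph, $\phi:F\to E_d$ a graph homomorphism, such that for every $w\in F^0$: (i) $w$ is a source (receives no edge) or receives exactly one edge $f_w$; (ii) if $w$ is a source or $\phi(f_w)$ is a nonspecial real edge, $\phi$ maps $s^{-1}(w)$ bijectively onto $s_d^{-1}(\phi(w))$; (iii) if $\phi(f_w)$ is a special real edge, onto $s_d^{-1}(\phi(w))\setminus\{\phi(f_w)^*\}$; (iv) if $\phi(f_w)$ is a ghost edge, onto the ghost edges in $s_d^{-1}(\phi(w))$. An isomorphism $(F,\phi)\to(G,\psi)$ is a graph isomorphism $\alpha$ with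 $\psi\circ\alpha=\phi$. $F$ is connected if any two vertices are joined by a path when edge directions are ignored. $(F_v,\phi_v)$ for $v\in E^0$: vertices $w_x$ ($x\in X_v$), edges $f_x$ ($x\in X_v\setminus\{v\}$) from $w_{x'}$ to $w_x$ where $x'$ is $x$ with its last edge removed ($x'=v$ if $|x|=1$); $\phi_v(w_x)=r_d(x)$, $\phi_v(f_x)=$ last edge of $x$. *)

From Stdlib Require Import List Relation_Operators.
Import ListNotations.

Set Implicit Arguments.
Unset Strict Implicit.

Record graph := Graph {
  vert : Type;
  edge : Type;
  src : edge -> vert;
  rng : edge -> vert
}.
Arguments src {_} _.
Arguments rng {_} _.

Definition row_finite (E : graph) : Prop :=
  forall v : vert E, exists l : list (edge E),
    forall e : edge E, src e = v <-> In e l.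

Definition special_choice (E : graph) (sp : vert E -> option (edge E)) : Prop :=
  forall v : vert E, (exists e, src e = v) ->
    exists e, sp v = Some e /\ src e = v.

Definition special (E : graph) (sp : vert E -> option (edge E)) (e : edge E)
  : Prop := sp (src e) = Some e.

(** The double graph E_d: real edges [inl e], ghost edges [inr e] (= e^* ). *)
Definition dedge (E : graph) : Type := (edge E + edge E)%type.

Definition sd (E : graph) (d : dedge E) : vert E :=
  match d with inl e => src e | inr e => rng e end.
Definition rd (E : graph) (d : dedge E) : vert E :=
  match d with inl e => rng e | inr e => src e end.

Definition double_graph (E : graph) : graph :=
  @Graph (vert E) (dedge E) (@sd E) (@rd E).

(** Paths in E_d starting at a vertex [v], given as the list of their edges
    (a path of length 0 is the vertex [v] itself). *)
Fixpoint dwalk (E : graph) (v : vert E) (l : list (dedge E)) : Prop :=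
  match l with
  | [] => True
  | d :: l' => sd d = v /\ dwalk (rd d) l'
  end.

Fixpoint dend (E : graph) (v : vert E) (l : list (dedge E)) : vert E :=
  match l with
  | [] => v
  | d :: l' => dend (rd d) l'
  end.

(** Note q^* = f_n^* ... f_1^*,
    i.e. [map inr (rev q)]; the path conditions on p, q and r(p) = r(q)
    are exactly the walk condition of the concatenation. *)
Definition basis (E : graph) (sp : vert E -> option (edge E))
    (v : vert E) (l : list (dedge E)) : Prop :=
  dwalk v l /\
  exists p q : list (edge E),
    l = map inl p ++ map inr (rev q) /\
    (forall (p0 q0 : list (edge E)) (e f : edge E),
        p = p0 ++ [e] -> q = q0 ++ [f] -> e <> f \/ ~ special sp e).

Lemma dwalk_app (E : graph) (v : vert E) (l1 l2 : list (dedge E)) :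
  dwalk v (l1 ++ l2) -> dwalk v l1.
Proof.
  revert v; induction l1 as [|d l1 IH]; simpl; intros v H; [exact I|].
  destruct H as [H1 H2]; split; [exact H1| exact (IH _ H2)].
Qed.

Lemma map_inl_inr (A : Type) (p1 p2 : list A) (q1 q2 : list A) :
  map (@inl A A) p1 ++ map (@inr A A) q1 = map inl p2 ++ map inr q2 ->
  p1 = p2 /\ q1 = q2.
Proof.
  revert p2; induction p1 as [|a p1 IH]; intros [|b p2]; simpl; intro H.
  - split; [reflexivity|]. revert q2 H; induction q1 as [|x q1 IHq];
      intros [|y q2]; simpl; intro H; try discriminate; auto.
    injection H; intros H1 H2; subst; f_equal; auto.
  - destruct q1; discriminate.
  - destruct q2; discriminate.
  - injection H; intros H1 H2; subst. destruct (IH _ H1); subst; auto.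
Qed.

Lemma basis_prefix (E : graph) (sp : vert E -> option (edge E))
    (v : vert E) (l : list (dedge E)) (d : dedge E) :
  basis sp v (l ++ [d]) -> basis sp v l.
Proof.
  intros [Hw [p [q [Hl Hc]]]]. split; [exact (dwalk_app Hw)|].
  destruct q as [|f1 q'].
  -
    simpl in Hl. rewrite app_nil_r in Hl.
    destruct p as [|e p'] using rev_ind.
    + destruct l; discriminate.
    + rewrite map_app in Hl. simpl in Hl. apply app_inj_tail in Hl.
      destruct Hl as [Hl _]. exists p', []. split.
      * rewrite Hl. simpl. now rewrite app_nil_r.
      * intros p0 q0 e0 f0 _ Hq. destruct q0; discriminate.
  - (* q = f1 :: q' : the last edge of l ++ [d] is f1^* *)
    simpl in Hl. rewrite map_app, app_assoc in Hl. simpl in Hl.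
    apply app_inj_tail in Hl. destruct Hl as [Hl _].
    exists p, q'. split; [exact Hl|].
    intros p0 q0 e0 f0 Hp Hq. apply (Hc p0 (f1 :: q0) e0 f0 Hp).
    rewrite Hq. reflexivity.
Qed.

Definition bij_onto (A B : Type) (f : A -> B) (P : A -> Prop) (Q : B -> Prop)
  : Prop :=
  (forall a, P a -> Q (f a)) /\
  (forall a1 a2, P a1 -> P a2 -> f a1 = f a2 -> a1 = a2) /\
  (forall b, Q b -> exists a, P a /\ f a = b).

Record rep_pair (E : graph) := RepPair {
  rgraph : graph;
  phi0 : vert rgraph -> vert E;
  phi1 : edge rgraph -> dedge E
}.
Arguments rgraph {E} _.
Arguments phi0 {E} _ _.
Arguments phi1 {E} _ _.

Definition is_hom (E : graph) (X : rep_pair E) : Prop :=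
  forall f : edge (rgraph X),
    sd (phi1 X f) = phi0 X (src f) /\ rd (phi1 X f) = phi0 X (rng f).

Definition is_ghost (E : graph) (d : dedge E) : Prop :=
  match d with inl _ => False | inr _ => True end.

Definition ext_rep_graph (E : graph) (sp : vert E -> option (edge E))
    (X : rep_pair E) : Prop :=
  is_hom X /\
  forall w : vert (rgraph X),
    ((forall f : edge (rgraph X), rng f <> w) \/
     (exists f, rng f = w /\ forall g, rng g = w -> g = f)) /\
    ((forall f : edge (rgraph X), rng f <> w) ->
       bij_onto (phi1 X) (fun g => src g = w)
                (fun d => sd d = phi0 X w)) /\
    (forall fw : edge (rgraph X), rng fw = w ->
       (forall g, rng g = w -> g = fw) ->
       (forall e, phi1 X fw = inl e -> ~ special sp e ->
          bij_onto (phi1 X) (fun g => src g = w)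
                   (fun d => sd d = phi0 X w)) /\
       (forall e, phi1 X fw = inl e -> special sp e ->
          bij_onto (phi1 X) (fun g => src g = w)
                   (fun d => sd d = phi0 X w /\ d <> inr e)) /\
       (forall e, phi1 X fw = inr e ->
          bij_onto (phi1 X) (fun g => src g = w)
                   (fun d => sd d = phi0 X w /\ is_ghost d))).

Definition adj (G : graph) (w w' : vert G) : Prop :=
  exists f : edge G, (src f = w /\ rng f = w') \/ (src f = w' /\ rng f = w).

Definition connected (G : graph) : Prop :=
  forall w w' : vert G, clos_refl_trans (vert G) (@adj G) w w'.

Definition has_source (G : graph) : Prop :=
  exists w : vert G, forall f : edge G, rng f <> w.

Definition rep_iso (E : graph) (X Y : rep_pair E) : Prop :=
  exists (a0 : vert (rgraph X) -> vert (rgraph Y))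
         (b0 : vert (rgraph Y) -> vert (rgraph X))
         (a1 : edge (rgraph X) -> edge (rgraph Y))
         (b1 : edge (rgraph Y) -> edge (rgraph X)),
    (forall w, b0 (a0 w) = w) /\ (forall w, a0 (b0 w) = w) /\
    (forall f, b1 (a1 f) = f) /\ (forall f, a1 (b1 f) = f) /\
    (forall f, src (a1 f) = a0 (src f)) /\
    (forall f, rng (a1 f) = a0 (rng f)) /\
    (forall w, phi0 Y (a0 w) = phi0 X w) /\
    (forall f, phi1 Y (a1 f) = phi1 X f).

(** Edges f_x, for x in X_v \ {v}: encoded as pairs (x', d) with x = x' ++ [d]
    (so x' is x with its last edge d removed); f_x goes from w_{x'} to w_x. *)
Section Fv.
Variables (E : graph) (sp : vert E -> option (edge E)) (v : vert E).

Definition Fv_vert : Type := { l : list (dedge E) | basis sp v l }.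
Definition Fv_edge : Type :=
  { p : list (dedge E) * dedge E | basis sp v (fst p ++ [snd p]) }.

Definition Fv_src (f : Fv_edge) : Fv_vert :=
  exist _ (fst (proj1_sig f)) (basis_prefix (proj2_sig f)).
Definition Fv_rng (f : Fv_edge) : Fv_vert :=
  exist _ (fst (proj1_sig f) ++ [snd (proj1_sig f)]) (proj2_sig f).

Definition Fv_graph : graph := @Graph Fv_vert Fv_edge Fv_src Fv_rng.

Definition Fv : rep_pair E :=
  @RepPair E Fv_graph
    (fun x : Fv_vert => dend v (proj1_sig x))
    (fun f : Fv_edge => snd (proj1_sig f)).
End Fv.

From Stdlib Require Import List Relation_Operators Classical ClassicalEpsilon ProofIrrelevance.
Import ListNotations.

Set Implicit Arguments.
Unset Strict Implicit.

(** Fix a source [w0] of the connected graph [F] and put [v := phi(w0)].  Every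
    vertex receives at most one edge and [w0] receives none, so each vertex [w]
    is the end of at most one path starting at [w0], and by connectedness of
    exactly one; label [w] by the image of that path, a path of [E_d] from [v].
    Conditions (ii)-(iv) say that the edges leaving [w] are labelled bijectively
    by the edges of [E_d] that may follow the label of the edge entering [w] in
    a basis path.  Hence the labels of paths from [w0] are exactly the basis
    paths in [X_v], and the labelling is an isomorphism onto [(F_v, phi_v)]. *)

Lemma nil_or_snoc (A : Type) (l : list A) : l = [] \/ exists x d, l = x ++ [d].
Proof. induction l using rev_ind; eauto. Qed.

Lemma bij_onto_iff (A B : Type) (f : A -> B) (P : A -> Prop) (Q Q' : B -> Prop) :
  bij_onto f P Q -> (forall b, Q b <-> Q' b) -> bij_onto f P Q'.
Proof.
  intros [Hmaps [Hinj Hsurj]] HQ. split; [|split]; [| exact Hinj |].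
  - intros a Ha. apply HQ. auto.
  - intros b Hb. apply HQ in Hb. auto.
Qed.

Lemma inverse_of_bijective (A B : Type) (f : A -> B) :
  (forall a1 a2, f a1 = f a2 -> a1 = a2) -> (forall b, exists a, f a = b) ->
  exists g : B -> A, (forall a, g (f a) = a) /\ (forall b, f (g b) = b).
Proof.
  intros Hinj Hsurj.
  exists (fun b => proj1_sig (constructive_indefinite_description _ (Hsurj b))).
  split.
  - intros a. apply Hinj. exact (proj2_sig (constructive_indefinite_description _ (Hsurj (f a)))).
  - intros b. exact (proj2_sig (constructive_indefinite_description _ (Hsurj b))).
Qed.

Lemma rep_iso_of_bijective (E : graph) (X Y : rep_pair E)
    (a0 : vert (rgraph X) -> vert (rgraph Y)) (a1 : edge (rgraph X) -> edge (rgraph Y)) :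
  (forall w1 w2, a0 w1 = a0 w2 -> w1 = w2) -> (forall w, exists w', a0 w' = w) ->
  (forall f1 f2, a1 f1 = a1 f2 -> f1 = f2) -> (forall f, exists f', a1 f' = f) ->
  (forall f, src (a1 f) = a0 (src f)) -> (forall f, rng (a1 f) = a0 (rng f)) ->
  (forall w, phi0 Y (a0 w) = phi0 X w) -> (forall f, phi1 Y (a1 f) = phi1 X f) ->
  rep_iso X Y.
Proof.
  intros Hinj0 Hsurj0 Hinj1 Hsurj1 Hsrc Hrng Hphi0 Hphi1.
  destruct (inverse_of_bijective Hinj0 Hsurj0) as [b0 [Hb0a0 Ha0b0]].
  destruct (inverse_of_bijective Hinj1 Hsurj1) as [b1 [Hb1a1 Ha1b1]].
  exists a0, b0, a1, b1. tauto.
Qed.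

Section BasisPaths.
Variables (E : graph) (sp : vert E -> option (edge E)).

(* [b] may follow [a] in a basis path [p q^*]: a ghost edge is never followed by
   a real one, and [e e^*] occurs only for nonspecial [e]. *)
Definition admissible_pair (a b : dedge E) : Prop :=
  match a, b with
  | inr _, inl _ => False
  | inl e, inr f => e <> f \/ ~ special sp e
  | _, _ => True
  end.

Fixpoint admissible (l : list (dedge E)) : Prop :=
  match l with
  | a :: (b :: _) as t => admissible_pair a b /\ admissible t
  | _ => True
  end.

Lemma admissible_snoc (x : list (dedge E)) (d : dedge E) :
  admissible (x ++ [d]) <->
  admissible x /\ (forall x' a, x = x' ++ [a] -> admissible_pair a d).
Proof.
  induction x as [|a t IH]; simpl.
  - split; [|tauto]. intros _. split; [exact I|]. intros [|] a H; discriminate.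
  - destruct t as [|b t']; simpl in *.
    + split.
      * intros [H _]. split; [exact I|]. intros [|c [|]] a' Hx; try discriminate.
        injection Hx as <-. exact H.
      * intros [_ H]. split; [apply (H []); reflexivity | exact I].
    + rewrite IH. split.
      * intros [Hab [Hg Hl]]. split; [tauto|].
        intros [|c x''] a' Hx; simpl in Hx; injection Hx as _ Hx.
        -- destruct t'; discriminate.
        -- exact (Hl x'' a' Hx).
      * intros [[Hab Hg] Hl]. split; [exact Hab|]. split; [exact Hg|].
        intros x' a' Hx. apply (Hl (a :: x')). rewrite Hx. reflexivity.
Qed.

Lemma admissible_real_ghost (p r : list (edge E)) :
  (forall p0 e f r0, p = p0 ++ [e] -> r = f :: r0 -> e <> f \/ ~ special sp e) ->
  admissible (map inl p ++ map inr r).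
Proof.
  revert r. induction p as [|e p IH]; intros r Hlast; simpl.
  - clear Hlast. induction r as [|f [|f' r] IHr]; [exact I | exact I | split; [exact I | exact IHr]].
  - destruct p as [|e' p']; simpl.
    + destruct r as [|f r0]; simpl; [exact I|].
      split; [apply (Hlast [] e f r0); reflexivity|].
      exact (IH (f :: r0) (fun p0 _ _ _ H => ltac:(destruct p0; discriminate))).
    + split; [exact I|]. apply (IH r). intros p0 e0 f r0 H1 H2.
      apply (Hlast (e :: p0) e0 f r0); [rewrite H1; reflexivity | exact H2].
Qed.

Lemma admissible_split (l : list (dedge E)) :
  admissible l -> exists p r, l = map inl p ++ map inr r /\
    (forall p0 e f r0, p = p0 ++ [e] -> r = f :: r0 -> e <> f \/ ~ special sp e).
Proof.
  induction l as [|a t IH]; intros Hadm.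
  - exists [], []. split; [reflexivity|]. intros p0 e f r0 H; destruct p0; discriminate.
  - assert (Hhead : match t with [] => True | b :: _ => admissible_pair a b end)
      by (destruct t; [exact I | exact (proj1 Hadm)]).
    assert (Ht : admissible t) by (destruct t as [|b t]; [exact I | exact (proj2 Hadm)]).
    destruct (IH Ht) as [p [r [-> Hlast]]].
    destruct a as [e|f].
    + exists (e :: p), r. split; [reflexivity|].
      intros [|e1 p0] e0 f r0 H1 H2; simpl in H1; injection H1 as <- H1.
      * subst. exact Hhead.
      * exact (Hlast p0 e0 f r0 H1 H2).
    + destruct p as [|e p'].
      * exists [], (f :: r). split; [reflexivity|]. intros p0 e0 f0 r0 H; destruct p0; discriminate.
      * destruct Hhead.
Qed.

Lemma basis_iff_admissible (v : vert E) (l : list (dedge E)) :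
  basis sp v l <-> dwalk v l /\ admissible l.
Proof.
  split.
  - intros [Hw [p [q [-> Hlast]]]]. split; [exact Hw|]. apply admissible_real_ghost.
    intros p0 e f r0 H1 H2. apply (Hlast p0 (rev r0) e f H1).
    rewrite <- (rev_involutive q), H2. reflexivity.
  - intros [Hw Hadm]. split; [exact Hw|].
    destruct (admissible_split Hadm) as [p [r [Hl Hlast]]].
    exists p, (rev r). rewrite rev_involutive. split; [exact Hl|].
    intros p0 q0 e f H1 H2. apply (Hlast p0 e f (rev q0) H1).
    rewrite <- (rev_involutive r), H2, rev_app_distr. reflexivity.
Qed.

Lemma dwalk_snoc (v : vert E) (x : list (dedge E)) (d : dedge E) :
  dwalk v (x ++ [d]) <-> dwalk v x /\ sd d = dend v x.
Proof. revert v; induction x as [|a x IH]; intros v; simpl; [|rewrite IH]; tauto. Qed.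

Lemma dend_snoc (v : vert E) (x : list (dedge E)) (d : dedge E) :
  dend v (x ++ [d]) = rd d.
Proof. revert v; induction x as [|a x IH]; intros v; simpl; auto. Qed.

Lemma basis_snoc (v : vert E) (x : list (dedge E)) (d : dedge E) :
  basis sp v (x ++ [d]) <->
  basis sp v x /\ sd d = dend v x /\ (forall x' a, x = x' ++ [a] -> admissible_pair a d).
Proof. rewrite !basis_iff_admissible, dwalk_snoc, admissible_snoc. tauto. Qed.

End BasisPaths.

Section ExtRepGraph.
Variables (E : graph) (sp : vert E -> option (edge E)) (X : rep_pair E).
Hypothesis Hext : ext_rep_graph sp X.

Lemma sd_phi1 (f : edge (rgraph X)) : sd (phi1 X f) = phi0 X (src f).
Proof. exact (proj1 (proj1 Hext f)). Qed.

Lemma rd_phi1 (f : edge (rgraph X)) : rd (phi1 X f) = phi0 X (rng f).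
Proof. exact (proj2 (proj1 Hext f)). Qed.

Lemma in_edge_unique (g1 g2 : edge (rgraph X)) : rng g1 = rng g2 -> g1 = g2.
Proof.
  intros H. destruct (proj1 (proj2 Hext (rng g1))) as [Hsrc|[f [_ Hf]]].
  - exfalso; exact (Hsrc g1 eq_refl).
  - rewrite (Hf g1 eq_refl), (Hf g2 (eq_sym H)). reflexivity.
Qed.

Lemma out_edges_labelling (w : vert (rgraph X)) :
  ((forall f, rng f <> w) /\
     bij_onto (phi1 X) (fun g => src g = w) (fun d => sd d = phi0 X w)) \/
  (exists fw, rng fw = w /\
     bij_onto (phi1 X) (fun g => src g = w)
       (fun d => sd d = phi0 X w /\ admissible_pair sp (phi1 X fw) d)).
Proof.
  destruct (proj2 Hext w) as [[Hsrc|[f [Hf Hfu]]] [Hii Hin]]; [left; auto | right].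
  exists f. split; [exact Hf|].
  destruct (Hin f Hf Hfu) as [Hnonsp [Hsp Hghost]].
  destruct (phi1 X f) as [e|e].
  - destruct (classic (special sp e)) as [He|He].
    + apply (bij_onto_iff (Hsp e eq_refl He)). intros [b|b]; simpl.
      * split; [intros [H _]; tauto | intros [H _]; split; [exact H | discriminate]].
      * split; intros [H1 H2]; split; auto.
        -- left. intros <-. auto.
        -- intros Hb. injection Hb as <-. tauto.
    + apply (bij_onto_iff (Hnonsp e eq_refl He)). intros [b|b]; simpl; tauto.
  - apply (bij_onto_iff (Hghost e eq_refl)). intros [b|b]; simpl; tauto.
Qed.

Lemma out_edge_inj (g1 g2 : edge (rgraph X)) :
  src g1 = src g2 -> phi1 X g1 = phi1 X g2 -> g1 = g2.
Proof.
  intros Hs Hphi.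
  destruct (out_edges_labelling (src g1)) as [[_ [_ [Hinj _]]]|[fw [_ [_ [Hinj _]]]]];
    apply Hinj; auto.
Qed.

Variable w0 : vert (rgraph X).

Inductive path_to : list (dedge E) -> vert (rgraph X) -> Prop :=
| path_to_nil : path_to [] w0
| path_to_snoc x g : path_to x (src g) -> path_to (x ++ [phi1 X g]) (rng g).

Lemma path_to_nil_inv (w : vert (rgraph X)) : path_to [] w -> w = w0.
Proof.
  intros H. remember [] as x eqn:Hx. destruct H; [reflexivity|].
  destruct x; discriminate.
Qed.

Lemma path_to_snoc_inv (x : list (dedge E)) (d : dedge E) (w : vert (rgraph X)) :
  path_to (x ++ [d]) w -> exists g, path_to x (src g) /\ phi1 X g = d /\ rng g = w.
Proof.
  intros H. remember (x ++ [d]) as y eqn:Hy. destruct H as [|x' g H].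
  - destruct x; discriminate.
  - apply app_inj_tail in Hy as [Hx Hd]. subst. eauto.
Qed.

Lemma path_to_dend (x : list (dedge E)) (w : vert (rgraph X)) :
  path_to x w -> phi0 X w = dend (phi0 X w0) x.
Proof. induction 1; [reflexivity|]. now rewrite dend_snoc, rd_phi1. Qed.

Lemma path_to_functional (x : list (dedge E)) (w1 w2 : vert (rgraph X)) :
  path_to x w1 -> path_to x w2 -> w1 = w2.
Proof.
  intros H1; revert w2; induction H1 as [|x g H IH]; intros w2 H2.
  - symmetry. exact (path_to_nil_inv H2).
  - destruct (path_to_snoc_inv H2) as [g' [H' [Hphi <-]]].
    f_equal. apply out_edge_inj; [exact (IH _ H') | exact (eq_sym Hphi)].
Qed.

Lemma path_to_basis (x : list (dedge E)) (w : vert (rgraph X)) :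
  path_to x w -> basis sp (phi0 X w0) x.
Proof.
  induction 1 as [|x g H IH].
  - split; [exact I|]. exists [], []. split; [reflexivity|].
    intros p0 q0 e f Hp; destruct p0; discriminate.
  - apply basis_snoc. split; [exact IH|]. split; [rewrite sd_phi1; exact (path_to_dend H)|].
    intros x' a ->. destruct (path_to_snoc_inv H) as [g0 [_ [<- Hg0]]].
    destruct (out_edges_labelling (src g)) as [[Hsrc _]|[fw [Hfw [Hmaps _]]]].
    + exfalso; exact (Hsrc g0 Hg0).
    + rewrite (in_edge_unique (eq_trans Hg0 (eq_sym Hfw))).
      exact (proj2 (Hmaps g eq_refl)).
Qed.

Hypothesis Hw0 : forall f : edge (rgraph X), rng f <> w0.

Lemma path_to_injective (x y : list (dedge E)) (w : vert (rgraph X)) :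
  path_to x w -> path_to y w -> x = y.
Proof.
  intros Hx; revert y; induction Hx as [|x g H IH]; intros y Hy;
    destruct (nil_or_snoc y) as [->|[y' [d ->]]].
  - reflexivity.
  - destruct (path_to_snoc_inv Hy) as [g' [_ [_ Hg']]]. destruct (Hw0 Hg').
  - destruct (Hw0 (path_to_nil_inv Hy)).
  - destruct (path_to_snoc_inv Hy) as [g' [H' [<- Hg']]].
    rewrite (in_edge_unique Hg') in H' |- *. now rewrite (IH y' H').
Qed.

Lemma path_to_extend (x : list (dedge E)) (d : dedge E) (w : vert (rgraph X)) :
  path_to x w -> basis sp (phi0 X w0) (x ++ [d]) -> exists g, src g = w /\ phi1 X g = d.
Proof.
  intros Hx Hb. apply basis_snoc in Hb as [_ [Hsd Hadm]].
  rewrite <- (path_to_dend Hx) in Hsd.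
  destruct (out_edges_labelling w) as [[_ [_ [_ Hsurj]]]|[fw [Hfw [_ [_ Hsurj]]]]].
  - destruct (Hsurj d Hsd) as [g [Hg Hgd]]. eauto.
  - destruct (nil_or_snoc x) as [->|[x' [a ->]]].
    + destruct (Hw0 (eq_trans Hfw (path_to_nil_inv Hx))).
    + destruct (path_to_snoc_inv Hx) as [g0 [_ [<- Hg0]]].
      rewrite <- (in_edge_unique (eq_trans Hg0 (eq_sym Hfw))) in Hsurj.
      destruct (Hsurj d (conj Hsd (Hadm x' _ eq_refl))) as [g [Hg Hgd]]. eauto.
Qed.

Lemma path_to_total (x : list (dedge E)) :
  basis sp (phi0 X w0) x -> exists w, path_to x w.
Proof.
  induction x as [|d x IH] using rev_ind; intros Hb.
  - exists w0. constructor.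
  - destruct (IH (basis_prefix Hb)) as [w Hx].
    destruct (path_to_extend Hx Hb) as [g [<- <-]].
    exists (rng g). constructor. exact Hx.
Qed.

Hypothesis Hconn : connected (rgraph X).

(* The set of vertices reached from [w0] is closed along edges in both
   directions, because the edge entering a vertex is unique. *)
Lemma path_to_reach (w : vert (rgraph X)) : exists x, path_to x w.
Proof.
  set (reached := fun w => exists x, path_to x w).
  assert (Hedge : forall f, reached (src f) <-> reached (rng f)).
  { intros f. split.
    - intros [x Hx]. exists (x ++ [phi1 X f]). constructor. exact Hx.
    - intros [x Hx]. destruct (nil_or_snoc x) as [->|[x' [d ->]]].
      + destruct (Hw0 (path_to_nil_inv Hx)).
      + destruct (path_to_snoc_inv Hx) as [g [Hg [_ Hgf]]].
        rewrite (in_edge_unique Hgf) in Hg. exists x'. exact Hg. }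
  assert (Hclos : forall a b, clos_refl_trans _ (@adj (rgraph X)) a b ->
                    (reached a <-> reached b)).
  { induction 1 as [a b [f [[<- <-]|[<- <-]]]| a | a b c _ IH1 _ IH2];
      [apply Hedge | symmetry; apply Hedge | reflexivity | rewrite IH1; exact IH2]. }
  apply (Hclos w0 w (Hconn w0 w)). exists []. constructor.
Qed.

Definition label (w : vert (rgraph X)) : list (dedge E) :=
  proj1_sig (constructive_indefinite_description _ (path_to_reach w)).

Lemma path_to_label (w : vert (rgraph X)) : path_to (label w) w.
Proof. exact (proj2_sig (constructive_indefinite_description _ (path_to_reach w))). Qed.

Lemma label_rng (f : edge (rgraph X)) : label (rng f) = label (src f) ++ [phi1 X f].
Proof.
  apply (path_to_injective (path_to_label _)). constructor. apply path_to_label.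
Qed.

Definition vert_to_Fv (w : vert (rgraph X)) : Fv_vert sp (phi0 X w0) :=
  exist _ (label w) (path_to_basis (path_to_label w)).

Definition edge_to_Fv (f : edge (rgraph X)) : Fv_edge sp (phi0 X w0) :=
  exist (fun p => basis sp (phi0 X w0) (fst p ++ [snd p])) (label (src f), phi1 X f)
    (path_to_basis (path_to_snoc (path_to_label (src f)))).

Lemma rep_iso_Fv : rep_iso X (Fv sp (phi0 X w0)).
Proof.
  apply (@rep_iso_of_bijective E X (Fv sp (phi0 X w0)) vert_to_Fv edge_to_Fv).
  - intros w1 w2 H. apply (path_to_functional (path_to_label w1)).
    apply (f_equal (@proj1_sig _ _)) in H. simpl in H. rewrite H. apply path_to_label.
  - intros [x Hx]. destruct (path_to_total Hx) as [w Hw]. exists w.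
    apply subset_eq_compat. exact (path_to_injective (path_to_label w) Hw).
  - intros f1 f2 H. apply (f_equal (@proj1_sig _ _)) in H. simpl in H.
    injection H as Hsrc Hphi. apply out_edge_inj; [|exact Hphi].
    apply (path_to_functional (path_to_label _)). rewrite Hsrc. apply path_to_label.
  - intros [[x d] Hxd]. simpl in Hxd.
    destruct (path_to_total (basis_prefix Hxd)) as [w Hw].
    destruct (path_to_extend Hw Hxd) as [g [<- <-]]. exists g.
    apply subset_eq_compat. now rewrite (path_to_injective (path_to_label _) Hw).
  - intros f. now apply subset_eq_compat.
  - intros f. apply subset_eq_compat. symmetry. apply label_rng.
  - intros w. symmetry. exact (path_to_dend (path_to_label w)).
  - reflexivity.
Qed.

End ExtRepGraph.

Unset Implicit Arguments.

Theorem proposition5p6 (E : graph) (sp : vert E -> option (edge E))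
  (HE : row_finite E) (Hsp : special_choice sp) (X : rep_pair E) :
  ext_rep_graph sp X -> connected (rgraph X) -> has_source (rgraph X) ->
  exists v : vert E, rep_iso X (Fv sp v).
Proof.
  intros Hext Hconn [w0 Hw0]. exists (phi0 X w0).
  exact (rep_iso_Fv Hext Hw0 Hconn).
Qed.
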